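(* Let $k,\ell>0$ be real numbers and define $q_n=t_n-k$ and $r_n=t_n+\ell$ for all $n\ge0$. For complex $s$ with $\Re(s)>1$ put $\lambda(s;k,\ell)=2^s-\bigl(2^s(k-\ell)+(k+\ell)\bigr)$. Then for each $s$ with $\Re(s)>1$: (1) if $\lambda(s;k,\ell)=0$, then $\displaystyle\sum_{n\ge1}\frac{q_{n-1}}{n^s}=\frac{1-2^s}{1+2^s}\sum_{n\ge1}\frac{r_n}{n^s}$; (2) if $\lambda(s;k,\ell)=2^s$, then $\displaystyle(2^s+1)\sum_{n\ge1}\frac{q_{n-1}}{n^s}+(2^s-1)\sum_{n\ge1}\frac{r_n}{n^s}=2^s\zeta(s)$; (3) if $\lambda(s;k,\ell)=2^s-2$, then $\displaystyle(2^s+1)\sum_{n\ge1}\frac{q_{n-1}}{n^s}+(2^s-1)\sum_{n\ge1}\frac{r_n}{n^s}=2^s\eta(s)$.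
   Context: For $n\ge 0$, let $t_n\in\{0,1\}$ denote the sum of the binary digits of $n$ reduced modulo $2$ (so $t_0=0$; this is the Thue–Morse sequence). $\zeta(s)=\sum_{n\ge1}n^{-s}$ is the Riemann zeta function and $\eta(s)=\sum_{n\ge1}(-1)^{n-1}n^{-s}$ is the Dirichlet eta (alternating zeta) function, both for $\Re(s)>1$. *)

From Stdlib Require Import Reals BinNat BinPos.
From Coquelicot Require Import Coquelicot.
Open Scope R_scope.

Fixpoint pos_digit_sum (p : positive) : nat :=
  match p with
  | xH => 1%nat
  | xO p' => pos_digit_sum p'
  | xI p' => S (pos_digit_sum p')
  end.

Definition binary_digit_sum (n : nat) : nat :=
  match N.of_nat n with
  | N0 => 0%nat
  | Npos p => pos_digit_sum p
  end.

Definition thue_morse (n : nat) : R := INR (Nat.modulo (binary_digit_sum n) 2).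

(* x^s = exp(s ln x) for real x > 0 and complex s. *)
Definition cpow (x : R) (s : C) : C :=
  (exp (Re s * ln x) * cos (Im s * ln x), exp (Re s * ln x) * sin (Im s * ln x)).

Definition CSeries (a : nat -> C) : C :=
  (Series (fun n => Re (a n)), Series (fun n => Im (a n))).

(* Dirichlet series sum_{n>=1} f(n) / n^s, where f is given on n >= 1. *)
Definition dirichlet (f : nat -> C) (s : C) : C :=
  CSeries (fun n => (f (S n) / cpow (INR (S n)) s)%C).

Definition zeta (s : C) : C := dirichlet (fun _ => RtoC 1) s.
Definition eta (s : C) : C := dirichlet (fun n => RtoC ((-1) ^ (n - 1))) s.

Definition lambda (s : C) (k l : R) : C :=
  (cpow 2 s - (cpow 2 s * RtoC (k - l) + RtoC (k + l)))%C.

(* Let A = sum t(n-1) n^-s and B = sum t(n) n^-s.  Since t(2m) + t(2m+1) = 1 and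
   t(2m+1) + t(2m+2) = 1 + t(m+1) - t(m), splitting the Dirichlet series of t(n-1) + t(n)
   into odd and even n gives A + B = zeta(s) + 2^-s (B - A).  Hence
   (2^s + 1)(A - k zeta(s)) + (2^s - 1)(B + l zeta(s)) = lambda(s; k, l) zeta(s), from which
   the three cases follow; the last one also uses eta(s) = (1 - 2^(1-s)) zeta(s), obtained
   by the same odd/even splitting. *)

From Stdlib Require Import Reals BinNat Lia Lra.
From Coquelicot Require Import Coquelicot.
Open Scope R_scope.

Lemma sum_n_nonneg_mono (a : nat -> R) N M :
  (forall n, 0 <= a n) -> (N <= M)%nat -> sum_n a N <= sum_n a M.
Proof.
  intros Ha HNM. induction HNM as [|M _ IH]; [lra|].
  rewrite sum_Sn. specialize (Ha (S M)). change plus with Rplus. lra.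
Qed.

Lemma ex_series_nonneg_bounded (a : nat -> R) (B : R) :
  (forall n, 0 <= a n) -> (forall N, sum_n a N <= B) -> ex_series a.
Proof.
  intros Ha HB.
  destruct (ex_finite_lim_seq_incr (sum_n a) B) as [l Hl]; [|exact HB|now exists l].
  intros n. apply sum_n_nonneg_mono; [exact Ha|lia].
Qed.

Section PSeries.
Variable sigma : R.
Hypothesis Hsigma : 1 < sigma.

Let w n := Rpower (INR (S n)) (- sigma).
Let a := Rpower 2 (- sigma).

Lemma Rpower_S_nonneg n : 0 <= w n.
Proof. left. apply exp_pos. Qed.

Lemma Rpower_S_decr n : w (S n) <= w n.
Proof.
  unfold w, Rpower. left. apply exp_increasing.
  assert (ln (INR (S n)) < ln (INR (S (S n)))).
  { apply ln_increasing; [apply lt_0_INR; lia | apply lt_INR; lia]. }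
  nra.
Qed.

Lemma Rpower_S_double n : w (2 * n + 1) = a * w n.
Proof.
  unfold w, a. rewrite Rpower_mult_distr by (try lra; apply lt_0_INR; lia).
  f_equal. rewrite !S_INR, plus_INR, mult_INR. simpl. ring.
Qed.

Lemma two_Rpower_2_opp_lt_1 : 2 * a < 1.
Proof.
  unfold a. rewrite Rpower_Ropp.
  assert (Rpower 2 1 < Rpower 2 sigma) by (apply Rpower_lt; lra).
  rewrite Rpower_1 in H by lra.
  apply (Rmult_lt_reg_r (Rpower 2 sigma)); [lra|].
  rewrite Rmult_assoc, Rinv_l; lra.
Qed.

(* Grouping terms in pairs 2j+1, 2j+2 and bounding each pair by twice its first term. *)
Lemma sum_Rpower_S_double N : sum_n w (2 * N) <= 1 + 2 * a * (sum_n w N - w N).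
Proof.
  induction N as [|N IH].
  - change (2 * 0)%nat with 0%nat. rewrite sum_O.
    replace (w 0%nat) with 1 by (unfold w, Rpower; simpl; now rewrite ln_1, Rmult_0_r, exp_0).
    lra.
  - replace (2 * S N)%nat with (S (S (2 * N))) by lia.
    rewrite !sum_Sn. change plus with Rplus.
    pose proof (Rpower_S_double N) as Hodd. pose proof (Rpower_S_decr (2 * N + 1)) as Heven.
    rewrite Nat.add_1_r in Hodd, Heven. lra.
Qed.

Lemma ex_series_Rpower : ex_series w.
Proof.
  apply (ex_series_nonneg_bounded _ (/ (1 - 2 * a))); [exact Rpower_S_nonneg|].
  intros N.
  pose proof (sum_Rpower_S_double N); pose proof (Rpower_S_nonneg N).
  pose proof two_Rpower_2_opp_lt_1.
  assert (0 <= a) by (left; apply exp_pos).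
  assert (sum_n w N <= sum_n w (2 * N))
    by (apply sum_n_nonneg_mono; [exact Rpower_S_nonneg|lia]).
  apply (Rmult_le_reg_r (1 - 2 * a)); [lra|].
  rewrite Rinv_l by lra. nra.
Qed.

End PSeries.

Lemma binary_digit_sum_double n : binary_digit_sum (2 * n) = binary_digit_sum n.
Proof.
  unfold binary_digit_sum. rewrite Nnat.Nat2N.inj_mul. now destruct (N.of_nat n).
Qed.

Lemma binary_digit_sum_double_succ n :
  binary_digit_sum (2 * n + 1) = S (binary_digit_sum n).
Proof.
  unfold binary_digit_sum. rewrite Nnat.Nat2N.inj_add, Nnat.Nat2N.inj_mul.
  now destruct (N.of_nat n).
Qed.

Lemma mod2_succ d : (S d mod 2 = 1 - d mod 2)%nat.
Proof.
  induction d as [|d IH]; [reflexivity|].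
  replace (S (S d)) with (d + 1 * 2)%nat by lia. rewrite Nat.Div0.mod_add.
  pose proof (Nat.mod_upper_bound d 2 ltac:(lia)). lia.
Qed.

Lemma thue_morse_double n : thue_morse (2 * n) = thue_morse n.
Proof. unfold thue_morse. now rewrite binary_digit_sum_double. Qed.

Lemma thue_morse_double_succ n : thue_morse (2 * n + 1) = 1 - thue_morse n.
Proof.
  unfold thue_morse. rewrite binary_digit_sum_double_succ, mod2_succ, minus_INR; [easy|].
  pose proof (Nat.mod_upper_bound (binary_digit_sum n) 2 ltac:(lia)). lia.
Qed.

Lemma Rabs_thue_morse n : Rabs (thue_morse n) <= 1.
Proof.
  unfold thue_morse. rewrite Rabs_pos_eq by apply pos_INR.
  apply (le_INR _ 1). pose proof (Nat.mod_upper_bound (binary_digit_sum n) 2 ltac:(lia)). lia.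
Qed.

Open Scope C_scope.

Lemma Re_sum_n (a : nat -> C) N : Re (sum_n a N) = sum_n (fun n => Re (a n)) N.
Proof.
  induction N as [|N IH]; [now rewrite !sum_O|].
  rewrite !sum_Sn, <- IH. reflexivity.
Qed.

Lemma Im_sum_n (a : nat -> C) N : Im (sum_n a N) = sum_n (fun n => Im (a n)) N.
Proof.
  induction N as [|N IH]; [now rewrite !sum_O|].
  rewrite !sum_Sn, <- IH. reflexivity.
Qed.

Lemma is_series_Re_Im (a : nat -> C) (L : C) :
  is_series a L ->
  is_series (fun n => Re (a n)) (Re L) /\ is_series (fun n => Im (a n)) (Im L).
Proof.
  intros H; split; intros P [eps HP]; destruct (H _ (locally_ball L eps)) as [N HN];
    exists N; intros n Hn; apply HP; destruct (HN n Hn) as [H1 H2].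
  - rewrite <- Re_sum_n. exact H1.
  - rewrite <- Im_sum_n. exact H2.
Qed.

Lemma is_series_CSeries_unique (a : nat -> C) (L : C) : is_series a L -> CSeries a = L.
Proof.
  intros [HRe HIm]%is_series_Re_Im. unfold CSeries.
  rewrite (is_series_unique _ _ HRe), (is_series_unique _ _ HIm).
  now destruct L.
Qed.

Lemma Cmod_cpow (x : R) (s : C) : Cmod (cpow x s) = exp (Re s * ln x).
Proof.
  unfold cpow, Cmod; cbn [fst snd].
  set (E := exp (Re s * ln x)); set (t := (Im s * ln x)%R).
  replace ((E * cos t) ^ 2 + (E * sin t) ^ 2)%R with (E ^ 2)%R.
  - apply sqrt_pow2. left. apply exp_pos.
  - pose proof (sin2_cos2 t) as Hsc. unfold Rsqr in Hsc. nra.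
Qed.

Lemma cpow_neq_0 (x : R) (s : C) : cpow x s <> 0.
Proof.
  intros H. apply (f_equal Cmod) in H.
  rewrite Cmod_cpow, Cmod_0 in H. pose proof (exp_pos (Re s * ln x)). lra.
Qed.

Lemma cpow_mult (x y : R) (s : C) :
  (0 < x)%R -> (0 < y)%R -> cpow (x * y) s = cpow x s * cpow y s.
Proof.
  intros Hx Hy. unfold cpow. rewrite ln_mult by assumption.
  apply injective_projections; unfold Cmult; cbn [fst snd];
    rewrite !Rmult_plus_distr_l, exp_plus, ?cos_plus, ?sin_plus; ring.
Qed.

Lemma cpow_2_neq_m1 (s : C) : (1 < Re s)%R -> 1 + cpow 2 s <> 0.
Proof.
  intros Hs H.
  assert (Hc : cpow 2 s = (1 + cpow 2 s) - 1) by ring.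
  rewrite H in Hc. replace (0 - 1) with (- (1)) in Hc by ring.
  apply (f_equal Cmod) in Hc. rewrite Cmod_cpow, Cmod_m1, <- exp_0 in Hc.
  apply exp_inv in Hc. pose proof ln_lt_2. nra.
Qed.

Lemma sum_n_dyadic (a b c : nat -> C) (x : C) :
  (forall m, a (2 * m)%nat = b (2 * m)%nat) ->
  (forall m, a (2 * m + 1)%nat = b (2 * m + 1)%nat + x * c m) ->
  forall N, sum_n a (2 * N + 1) = sum_n b (2 * N + 1) + x * sum_n c N :> C.
Proof.
  intros Heven Hodd N. induction N as [|N IH].
  - change (2 * 0 + 1)%nat with 1%nat. rewrite !sum_Sn, !sum_O.
    change plus with Cplus.
    pose proof (Heven 0%nat) as H0; pose proof (Hodd 0%nat) as H1.
    change (2 * 0)%nat with 0%nat in H0; change (2 * 0 + 1)%nat with 1%nat in H1.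
    rewrite H0, H1. ring.
  - replace (2 * S N + 1)%nat with (S (S (2 * N + 1))) by lia.
    rewrite !sum_Sn, IH. change plus with Cplus.
    replace (S (2 * N + 1)) with (2 * S N)%nat by lia.
    replace (S (2 * S N)) with (2 * S N + 1)%nat by lia.
    rewrite Heven, Hodd. ring.
Qed.

Lemma is_series_dyadic (a b c : nat -> C) (A B Cc x : C) :
  is_series a A -> is_series b B -> is_series c Cc ->
  (forall m, a (2 * m)%nat = b (2 * m)%nat) ->
  (forall m, a (2 * m + 1)%nat = b (2 * m + 1)%nat + x * c m) ->
  A = B + x * Cc.
Proof.
  intros Ha Hb Hc Heven Hodd.
  assert (Hsub : filterlim (fun N => (2 * N + 1)%nat) eventually eventually)
    by (apply eventually_subseq; intros; lia).
  apply (@filterlim_locally_unique nat C_AbsRing C_NormedModule eventually _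
           (fun N => sum_n a (2 * N + 1))).
  - eapply filterlim_comp; [exact Hsub | exact Ha].
  - apply (filterlim_ext (fun N => plus (sum_n b (2 * N + 1)) (scal x (sum_n c N)))).
    { intros N. symmetry. exact (sum_n_dyadic a b c x Heven Hodd N). }
    eapply filterlim_comp_2;
      [| |exact (@filterlim_plus C_AbsRing C_NormedModule B (scal x Cc))].
    + eapply filterlim_comp; [exact Hsub | exact Hb].
    + eapply filterlim_comp;
        [exact Hc | exact (@filterlim_scal_r C_AbsRing C_NormedModule x Cc)].
Qed.

Definition dterm (f : nat -> C) (s : C) (n : nat) : C := f (S n) / cpow (INR (S n)) s.

Definition bounded_seq (f : nat -> C) : Prop := exists M, forall n, (Cmod (f n) <= M)%R.

Lemma is_series_dirichlet (f : nat -> C) (s : C) :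
  (1 < Re s)%R -> bounded_seq f -> is_series (dterm f s) (dirichlet f s).
Proof.
  intros Hs [M HM].
  assert (Hconv : ex_series (dterm f s)).
  { apply (@ex_series_le C_AbsRing C_CompleteNormedModule _
      (fun n => M * Rpower (INR (S n)) (- Re s))%R).
    - intros n. change norm with Cmod. unfold dterm.
      rewrite Cmod_div, Cmod_cpow by apply cpow_neq_0.
      unfold Rpower, Rdiv. rewrite Ropp_mult_distr_l_reverse, exp_Ropp.
      apply Rmult_le_compat_r; [left; apply Rinv_0_lt_compat, exp_pos | apply HM].
    - apply (@ex_series_scal_l R_AbsRing R_NormedModule M), ex_series_Rpower, Hs. }
  destruct Hconv as [L HL]. replace (dirichlet f s) with L; [exact HL|].
  symmetry. exact (is_series_CSeries_unique _ _ HL).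
Qed.

Lemma is_series_dterm_linear (f g h : nat -> C) (s a b Df Dg : C) :
  is_series (dterm f s) Df -> is_series (dterm g s) Dg ->
  (forall n, h n = a * f n + b * g n) ->
  is_series (dterm h s) (a * Df + b * Dg).
Proof.
  intros Hf Hg Hh.
  assert (E : forall n, a * dterm f s n + b * dterm g s n = dterm h s n)
    by (intros n; unfold dterm; rewrite Hh; unfold Cdiv; ring).
  apply (is_series_ext _ _ _ E).
  exact (is_series_plus _ _ _ _ (is_series_scal_l a _ _ Hf) (is_series_scal_l b _ _ Hg)).
Qed.

Lemma dirichlet_linear (f g h : nat -> C) (s a b : C) :
  (1 < Re s)%R -> bounded_seq f -> bounded_seq g ->
  (forall n, h n = a * f n + b * g n) ->
  dirichlet h s = a * dirichlet f s + b * dirichlet g s.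
Proof.
  intros Hs Hf Hg Hh. apply is_series_CSeries_unique, (is_series_dterm_linear f g); [| |exact Hh];
    apply is_series_dirichlet; assumption.
Qed.

Lemma bounded_seq_linear (f g : nat -> C) (a b : C) :
  bounded_seq f -> bounded_seq g -> bounded_seq (fun n => a * f n + b * g n).
Proof.
  intros [Mf Hf] [Mg Hg]. exists (Cmod a * Mf + Cmod b * Mg)%R. intros n.
  eapply Rle_trans; [apply Cmod_triangle|]. rewrite !Cmod_mult.
  apply Rplus_le_compat; apply Rmult_le_compat_l; auto using Cmod_ge_0.
Qed.

Lemma dirichlet_dyadic (f g h : nat -> C) (s : C) :
  (1 < Re s)%R -> bounded_seq f -> bounded_seq g -> bounded_seq h ->
  (forall m, f (2 * m + 1)%nat = g (2 * m + 1)%nat) ->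
  (forall m, f (2 * m + 2)%nat = g (2 * m + 2)%nat + h (m + 1)%nat) ->
  dirichlet f s = dirichlet g s + dirichlet h s / cpow 2 s.
Proof.
  intros Hs Hf Hg Hh Hodd Heven. unfold Cdiv. rewrite Cmult_comm.
  apply (is_series_dyadic (dterm f s) (dterm g s) (dterm h s));
    try (apply is_series_dirichlet; assumption); intros m; unfold dterm.
  - replace (S (2 * m)) with (2 * m + 1)%nat by lia. now rewrite Hodd.
  - replace (S (2 * m + 1)) with (2 * m + 2)%nat by lia.
    replace (S m) with (m + 1)%nat by lia.
    replace (INR (2 * m + 2)) with (2 * INR (m + 1))%R
      by (rewrite !plus_INR, mult_INR; simpl; ring).
    rewrite Heven, cpow_mult by (try lra; apply lt_0_INR; lia).
    pose proof (cpow_neq_0 2 s). pose proof (cpow_neq_0 (INR (m + 1)) s).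
    field. split; assumption.
Qed.

Lemma bounded_seq_const (c : C) : bounded_seq (fun _ => c).
Proof. exists (Cmod c). intros n. apply Rle_refl. Qed.

Lemma bounded_seq_thue_morse (idx : nat -> nat) :
  bounded_seq (fun n => RtoC (thue_morse (idx n))).
Proof. exists 1%R. intros n. rewrite Cmod_R. apply Rabs_thue_morse. Qed.

Section ThueMorseDirichlet.
Variable s : C.
Hypothesis Hs : (1 < Re s)%R.

Let tm (n : nat) : C := RtoC (thue_morse n).
Let tm_pred (n : nat) : C := RtoC (thue_morse (n - 1)).

Lemma dirichlet_thue_morse_relation :
  dirichlet tm_pred s + dirichlet tm s
  = zeta s + (dirichlet tm s - dirichlet tm_pred s) / cpow 2 s.
Proof.
  pose proof (bounded_seq_thue_morse (fun n => n));
  pose proof (bounded_seq_thue_morse (fun n => n - 1)%nat).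
  rewrite <- (Cmult_1_l (dirichlet tm_pred s)), <- (Cmult_1_l (dirichlet tm s)) at 1.
  rewrite <- (dirichlet_linear tm_pred tm (fun n => 1 * tm_pred n + 1 * tm n)) by easy.
  replace (dirichlet tm s - dirichlet tm_pred s)
    with (-1 * dirichlet tm_pred s + 1 * dirichlet tm s) by ring.
  rewrite <- (dirichlet_linear tm_pred tm (fun n => -1 * tm_pred n + 1 * tm n)) by easy.
  apply (dirichlet_dyadic _ (fun _ => 1));
    auto using bounded_seq_linear, bounded_seq_const; intros m; unfold tm_pred, tm.
  - replace (2 * m + 1 - 1)%nat with (2 * m)%nat by lia.
    rewrite thue_morse_double_succ, thue_morse_double, RtoC_minus. ring.
  - replace (2 * m + 2 - 1)%nat with (2 * m + 1)%nat by lia.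
    replace (2 * m + 2)%nat with (2 * (m + 1))%nat by lia.
    replace (m + 1 - 1)%nat with m by lia.
    rewrite thue_morse_double_succ, thue_morse_double, RtoC_minus. ring.
Qed.

End ThueMorseDirichlet.

Lemma thue_morse_dirichlet_combination (k l : R) (s : C) : (1 < Re s)%R ->
  (cpow 2 s + 1) * dirichlet (fun n => RtoC (thue_morse (n - 1) - k)) s
  + (cpow 2 s - 1) * dirichlet (fun n => RtoC (thue_morse n + l)) s
  = lambda s k l * zeta s.
Proof.
  intros Hs.
  pose proof (bounded_seq_thue_morse (fun n => n));
  pose proof (bounded_seq_thue_morse (fun n => n - 1)%nat).
  pose proof (bounded_seq_const 1).
  rewrite (dirichlet_linear (fun n => RtoC (thue_morse (n - 1))) (fun _ => 1)
             (fun n => RtoC (thue_morse (n - 1) - k)) s 1 (- k))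
    by (try easy; intros n; rewrite RtoC_minus; ring).
  rewrite (dirichlet_linear (fun n => RtoC (thue_morse n)) (fun _ => 1)
             (fun n => RtoC (thue_morse n + l)) s 1 l)
    by (try easy; intros n; rewrite RtoC_plus; ring).
  pose proof (dirichlet_thue_morse_relation s Hs) as Hrel.
  pose proof (cpow_neq_0 2 s). unfold lambda. rewrite RtoC_minus, RtoC_plus.
  change (dirichlet (fun _ => 1) s) with (zeta s).
  set (A := dirichlet (fun n => RtoC (thue_morse (n - 1))) s) in *.
  set (B := dirichlet (fun n => RtoC (thue_morse n)) s) in *.
  transitivity (cpow 2 s * (A + B - (B - A) / cpow 2 s)
                - k * (cpow 2 s + 1) * zeta s + l * (cpow 2 s - 1) * zeta s);
    [field; assumption|].
  rewrite Hrel. field. assumption.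
Qed.

Lemma eta_zeta (s : C) : (1 < Re s)%R -> eta s = (1 - 2 / cpow 2 s) * zeta s.
Proof.
  intros Hs.
  pose proof (bounded_seq_const 1) as Hone.
  assert (Hsign : bounded_seq (fun n => RtoC ((-1) ^ (n - 1))))
    by (exists 1%R; intros n; rewrite Cmod_R, pow_1_abs; lra).
  assert (Hodd : forall m, RtoC ((-1) ^ (2 * m + 1 - 1)) = 1).
  { intros m. replace (2 * m + 1 - 1)%nat with (2 * m)%nat by lia. now rewrite pow_1_even. }
  assert (Heven : forall m, RtoC ((-1) ^ (2 * m + 2 - 1)) = 1 + (-2 * 1 + 0 * 1)).
  { intros m. replace (2 * m + 2 - 1)%nat with (S (2 * m)) by lia. rewrite pow_1_odd.
    apply injective_projections; simpl; ring. }
  unfold eta.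
  rewrite (dirichlet_dyadic _ (fun _ => 1) (fun _ => -2 * 1 + 0 * 1))
    by auto using bounded_seq_linear.
  rewrite (dirichlet_linear (fun _ => 1) (fun _ => 1) (fun _ => -2 * 1 + 0 * 1) s (-2) 0)
    by easy.
  unfold Cdiv. fold (zeta s). ring.
Qed.

Theorem theorem4 (k l : R) (hk : (0 < k)%R) (hl : (0 < l)%R) (s : C) (hs : (1 < Re s)%R) :
  let q := fun n : nat => RtoC (thue_morse n - k)%R in
  let r := fun n : nat => RtoC (thue_morse n + l)%R in
  let Q := dirichlet (fun n => q (n - 1)%nat) s in
  let Rs := dirichlet r s in
  let two_s := cpow 2 s in
  (lambda s k l = 0 -> Q = (1 - two_s) / (1 + two_s) * Rs) /\
  (lambda s k l = two_s -> (two_s + 1) * Q + (two_s - 1) * Rs = two_s * zeta s) /\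
  (lambda s k l = two_s - 2 -> (two_s + 1) * Q + (two_s - 1) * Rs = two_s * eta s).
Proof.
  intros q r Q Rs two_s.
  assert (Hmain : (two_s + 1) * Q + (two_s - 1) * Rs = lambda s k l * zeta s)
    by exact (thue_morse_dirichlet_combination k l s hs).
  pose proof (cpow_neq_0 2 s) as Hc. pose proof (cpow_2_neq_m1 s hs) as Hnz.
  fold two_s in Hc, Hnz.
  split; [|split]; intros Hl; rewrite Hl in Hmain.
  - rewrite Cmult_0_l in Hmain.
    transitivity ((1 + two_s) * Q / (1 + two_s)); [field; exact Hnz|].
    replace ((1 + two_s) * Q) with ((two_s + 1) * Q + (two_s - 1) * Rs - (two_s - 1) * Rs)
      by ring.
    rewrite Hmain. field. exact Hnz.
  - exact Hmain.
  - rewrite Hmain, (eta_zeta s hs). fold two_s. field. exact Hc.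
Qed.
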